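(* Let $X$ be a contractible finite $T_0$-space with more than one point. Then $|X|-\mathrm{rank}(X_M)=1$.
   Context: A finite $T_0$-space is identified with a finite poset via $x\le y$ iff $U_x\subseteq U_y$, where $U_x$ is the minimal open set containing $x$. For a labelling $X=\{x_1,\dots,x_n\}$, $X_M=(x_{i,j})$ is the $n\times n$ matrix with $x_{i,j}=0$ if $x_i\le x_j$ and $x_{i,j}=1$ otherwise. *)

From HB Require Import structures.
From mathcomp Require Import all_boot all_order all_algebra.
From mathcomp Require Import all_classical all_reals all_analysis.
Set Implicit Arguments. Unset Strict Implicit. Unset Printing Implicit Defensive.
Import Order.TTheory GRing.Theory Num.Theory.
Import numFieldNormedType.Exports.
Local Open Scope classical_set_scope.
Local Open Scope ring_scope.

(* U_x : the minimal open set containing x (intersection of all open sets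
   containing x; open when X is finite). *)
Definition minimal_open (X : topologicalType) (x : X) : set X :=
  \bigcap_(U in [set U : set X | open U /\ U x]) U.

Definition fin_le (X : topologicalType) (x y : X) : Prop :=
  minimal_open x `<=` minimal_open y.

Definition XM (R : fieldType) (X : topologicalType) (n : nat)
  (lab : 'I_n -> X) : 'M[R]_n :=
  \matrix_(i < n, j < n) (if `[< fin_le (lab i) (lab j) >] then 0 else 1).

Definition contractible (R : realType) (X : topologicalType) : Prop :=
  exists (x0 : X) (H : X * R -> X),
    {within [set p : X * R | 0 <= p.2 <= 1], continuous H} /\
    (forall x, H (x, 0) = x) /\ (forall x, H (x, 1) = x0).

From HB Require Import structures.
From mathcomp Require Import all_boot all_order all_algebra.
From mathcomp Require Import all_classical all_reals all_analysis.
From mathcomp Require Import wochoice.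
Import Order.TTheory GRing.Theory Num.Theory.
Import numFieldNormedType.Exports.
Set Implicit Arguments. Unset Strict Implicit. Unset Printing Implicit Defensive.
Local Open Scope ring_scope.

(** Homotopic maps between finite T0-spaces are joined by a fence of comparable
   order-preserving maps, so a contractible finite space is contractible as a
   poset.  Removing a beat point keeps the poset contractible and does not change
   the total mass of its weighting [a] (the solution of [sum_(y <= z) a y = 1]);
   a contractible poset without beat points is a single point, so that mass is 1.
   Now X_M = J - Z with J the all-ones matrix and Z the invertible incidence
   matrix of the order, so [rank X_M >= n - 1], while the row vector [a], for
   which [a Z = a J], lies in the left kernel of X_M. *)

Section Weightings.
Variables (T : finType) (F : fieldType).
Implicit Types (le : rel T) (S : {set T}) (p q a b : T -> F).

Lemma setD1_ind (P : {set T} -> Prop) :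
  (forall S, (forall x, x \in S -> P (S :\ x)) -> P S) -> forall S, P S.
Proof.
move=> IH S; move: {2}#|S| (leqnn #|S|) => k.
elim: k S => [|k IHk] S Sk; apply: IH => x xS.
  by move: Sk; rewrite leqn0 cards_eq0 => /eqP S0; rewrite S0 inE in xS.
by apply: IHk; rewrite -ltnS (leq_trans _ Sk) // (cardsD1 x S) xS.
Qed.

Definition dual_rel le : rel T := fun x y => le y x.

Lemma partial_order_dual le : partial_order le -> partial_order (dual_rel le).
Proof.
rewrite /dual_rel; case=> -[refl tr] anti; split; first split=> // y x z xy yz.
  exact: tr yz xy.
by move=> x y /andP[xy yx]; apply: anti; rewrite xy yx.
Qed.

Lemma ex_minimal le S x0 : partial_order le -> x0 \in S ->
  exists2 x, x \in S & forall y, y \in S -> le y x -> y = x.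
Proof.
case=> -[refl tr] anti x0S.
case: (arg_minnP (fun x => #|[set y in S | le y x]|) x0S) => x xS xmin.
exists x => // y yS yx; apply: anti; rewrite yx /=.
apply: contraTT (xmin y yS) => xy; rewrite -ltnNge; apply: proper_card.
apply/properP; split.
  by apply/fintype.subsetP => z; rewrite !inE => /andP[-> zy]; exact: tr zy yx.
by exists x; rewrite !inE ?refl ?(negbTE xy) ?andbF ?andbT.
Qed.

Definition zeta_sol le S p a :=
  forall z, z \in S -> \sum_(y in S | le y z) a y = p z.

Lemma sum_setD1_if S x (P : pred T) (f : T -> F) :
  \sum_(y in S | P y) (if y == x then 0 else f y) = \sum_(y in S :\ x | P y) f y.
Proof.
rewrite big_mkcond [RHS]big_mkcond; apply: eq_bigr => y _.
by rewrite !inE; case: eqP; case: (y \in S); case: (P y).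
Qed.

Lemma zeta_sol_exists le S p : partial_order le -> exists a, zeta_sol le S p a.
Proof.
move=> po; have [[refl _] _] := po.
elim/setD1_ind: S => S IH.
have [->|[x0 x0S]] := set_0Vmem S; first by exists (fun=> 0) => z; rewrite inE.
have [x xS xmax] := ex_minimal (partial_order_dual po) x0S.
have [a' Ha'] := IH x xS.
set s := \sum_(y in S :\ x | le y x) a' y.
exists (fun y => if y == x then p x - s else a' y).
move=> z zS; case: (z =P x) => [->|/eqP zx].
  rewrite (bigD1 x) ?xS ?refl //= eqxx.
  suff -> : \sum_(y | (y \in S) && le y x && (y != x))
      (if y == x then p x - s else a' y) = s by rewrite subrK.
  rewrite /s -sum_setD1_if big_mkcondr /=.
  by apply: eq_bigr => y _; case: eqP.
rewrite -(Ha' z) ?inE ?zx // -sum_setD1_if; apply: eq_bigr => y /andP[_ yz].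
by case: eqP => // yx; move: zx; rewrite -(xmax z zS) ?eqxx // -yx.
Qed.

Lemma zeta_sol_reciprocity le S p q a b :
  zeta_sol le S p a -> zeta_sol (dual_rel le) S q b ->
  \sum_(y in S) a y * q y = \sum_(y in S) p y * b y.
Proof.
move=> Ha Hb.
transitivity (\sum_(y in S) \sum_(z in S) (if le y z then a y * b z else 0)).
  apply: eq_bigr => y yS; rewrite -(Hb y yS) big_distrr big_mkcondr /=.
  by apply: eq_bigr => z _; rewrite /dual_rel; case: (le y z); rewrite ?mulr0.
rewrite exchange_big; apply: eq_bigr => z zS.
rewrite -(Ha z zS) big_distrl big_mkcondr /=.
by apply: eq_bigr => y _; case: (le y z); rewrite ?mul0r.
Qed.

Lemma zeta_sol0 le S a : partial_order le ->
  zeta_sol le S (fun=> 0) a -> {in S, forall y, a y = 0}.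
Proof.
move=> po Ha y yS.
have [b Hb] := zeta_sol_exists S (fun z => (z == y)%:R) (partial_order_dual po).
have := zeta_sol_reciprocity Ha Hb.
rewrite [RHS]big1 => [|z _]; last by rewrite mul0r.
rewrite (bigD1 y) //= eqxx mulr1 big1 ?addr0 // => z /andP[_ /negbTE ->].
by rewrite mulr0.
Qed.

Lemma eq_zeta_sol le S p a a' : partial_order le ->
  zeta_sol le S p a -> zeta_sol le S p a' -> {in S, a =1 a'}.
Proof.
move=> po Ha Ha' y yS; apply/eqP; rewrite -subr_eq0; apply/eqP.
apply: (@zeta_sol0 le S (fun y => a y - a' y)) => // z zS.
by rewrite sumrB Ha // Ha' // subrr.
Qed.

(* The total mass of a weighting is the Euler characteristic of the order complex. *)
Definition euler_char1 le S :=
  forall a, zeta_sol le S (fun=> 1) a -> \sum_(y in S) a y = 1.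

Lemma euler_char1_dual le S : partial_order le ->
  euler_char1 le S -> euler_char1 (dual_rel le) S.
Proof.
move=> po chi b Hb; have [a Ha] := zeta_sol_exists S (fun=> 1) po.
have := zeta_sol_reciprocity Ha Hb.
under eq_bigr do rewrite mulr1; under [in X in _ = X -> _]eq_bigr do rewrite mul1r.
by rewrite (chi a Ha).
Qed.

Definition down_beat le S x :=
  [exists m in S, [&& m != x, le m x & [forall y in S, (y != x) && le y x ==> le y m]]].

(* Extending the weighting of [S :\ x] by 0 at [x] gives a weighting of [S]:
   the points of [S :\ x] below [x] are exactly those below [m]. *)
Lemma euler_char1_remove_beat le S x : partial_order le -> x \in S ->
  down_beat le S x -> euler_char1 le (S :\ x) -> euler_char1 le S.
Proof.
move=> po xS /exists_inP[m mS /and3P[mx mx' mmax]] chi a Ha.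
have [[_ tr] _] := po.
have [a' Ha'] := zeta_sol_exists (S :\ x) (fun=> 1) po.
pose a'' y := if y == x then 0 else a' y.
have Ha'' : zeta_sol le S (fun=> 1) a''.
  move=> z zS; rewrite /a'' sum_setD1_if; case: (z =P x) => [->|/eqP zx].
    rewrite -(Ha' m); last by rewrite !inE mx.
    apply: eq_bigl => y; rewrite !inE; case: (y =P x) => //= /eqP yx.
    case yS: (y \in S) => //=; apply/idP/idP => [yx'|ym]; last exact: tr ym mx'.
    by move/forall_inP/(_ y yS)/implyP: mmax; apply; rewrite yx yx'.
  by apply: Ha'; rewrite !inE zx.
rewrite (eq_bigr a'') => [|y yS]; last exact: eq_zeta_sol Ha Ha'' y yS.
rewrite -(chi a' Ha') (big_setD1 x xS) /= /a'' eqxx add0r.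
by apply: eq_bigr => y; rewrite !inE => /andP[/negbTE ->].
Qed.

Definition monotone_on le S (f : T -> T) :=
  {in S, forall x, f x \in S} /\ {in S &, {homo f : x y / le x y}}.

Definition comparable_on le S (f g : T -> T) :=
  {in S, forall x, le (f x) (g x)} \/ {in S, forall x, le (g x) (f x)}.

Inductive fence le S : (T -> T) -> Prop :=
  | fence_id f : {in S, forall x, f x = x} -> fence le S f
  | fence_step f g :
      fence le S f -> monotone_on le S g -> comparable_on le S f g -> fence le S g.

Definition order_contractible le S :=
  exists2 f, fence le S f & exists2 c, c \in S & {in S, forall x, f x = c}.

Lemma fence_monotone le S f : fence le S f -> monotone_on le S f.
Proof.
by case=> [g gid|g h _ hmono _] //; split=> [x xS|x y xS yS]; rewrite ?gid.
Qed.

Lemma fence_dual le S f : fence le S f -> fence (dual_rel le) S f.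
Proof.
elim=> [g gid|g h _ IH [hS hmono] gh]; first exact: fence_id.
apply: fence_step IH _ _; first by split=> // x y xS yS; exact: hmono.
by rewrite /comparable_on /dual_rel; case: gh; [right|left].
Qed.

Lemma order_contractible_dual le S :
  order_contractible le S -> order_contractible (dual_rel le) S.
Proof. by case=> f /fence_dual; exists f. Qed.

(* A minimal non-fixed point [y] would be a down beat point, dominated by [f y]. *)
Lemma monotone_below_id le S f : partial_order le ->
  {in S, forall x, ~~ down_beat le S x} ->
  monotone_on le S f -> {in S, forall x, le (f x) x} -> {in S, forall x, f x = x}.
Proof.
move=> po nobeat [fS fmono] fle x xS; apply/eqP/negPn/negP => fx.
have [|y] := ex_minimal (S := [set y in S | f y != y]) po (_ : x \in _).
  by rewrite !inE xS fx.
rewrite !inE => /andP[yS fy] ymin.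
have fixed z : z \in S -> z != y -> le z y -> f z = z.
  move=> zS zy zley; apply/eqP/negPn/negP => fz.
  by move: zy; rewrite (ymin z) ?eqxx // !inE zS.
move/negP: (nobeat y yS); apply; apply/exists_inP; exists (f y); first exact: fS.
rewrite fy fle //=; apply/forall_inP => z zS; apply/implyP => /andP[zy zley].
by rewrite -(fixed z zS zy zley); exact: fmono.
Qed.

Lemma core_fence_id le S f : partial_order le ->
  {in S, forall x, ~~ down_beat le S x} ->
  {in S, forall x, ~~ down_beat (dual_rel le) S x} ->
  fence le S f -> {in S, forall x, f x = x}.
Proof.
move=> po nobeat nobeat'; elim=> [//|g h _ IH [hS hmono] [gh|hg]].
- apply: (monotone_below_id (partial_order_dual po)) => //.
    by split=> // x y xS yS; exact: hmono.
  by move=> x xS; rewrite /dual_rel -{1}(IH x xS); exact: gh.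
- by apply: (monotone_below_id po) => // x xS; rewrite -{2}(IH x xS); exact: hg.
Qed.

Section Retraction.
Variables (le : rel T) (S S' : {set T}) (r : T -> T).
Hypotheses (sub_S'S : S' \subset S) (r_into : {in S, forall x, r x \in S'})
  (r_mono : {in S &, {homo r : x y / le x y}}) (r_id : {in S', forall x, r x = x}).

Lemma fence_retract f : fence le S f -> fence le S' (r \o f).
Proof.
have S'S := fintype.subsetP sub_S'S.
elim=> [g gid|g h fg IH [hS hmono] gh].
  by apply: fence_id => x xS' /=; rewrite gid ?S'S // r_id.
have [gS _] := fence_monotone fg.
apply: fence_step IH _ _.
  split=> [x xS'|x y xS' yS' xy] /=; first by rewrite r_into // hS // S'S.
  by rewrite r_mono ?hS ?S'S // hmono ?S'S.
by case: gh => gh; [left|right] => x xS' /=; rewrite r_mono ?gS ?hS ?S'S ?gh ?S'S.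
Qed.

Lemma order_contractible_retract :
  order_contractible le S -> order_contractible le S'.
Proof.
case=> f /fence_retract fr [c cS fc]; exists (r \o f) => //.
by exists (r c); rewrite ?r_into // => x xS' /=; rewrite fc // (fintype.subsetP sub_S'S).
Qed.
End Retraction.

Lemma order_contractible_remove_beat le S x : partial_order le -> x \in S ->
  down_beat le S x -> order_contractible le S -> order_contractible le (S :\ x).
Proof.
case=> -[refl tr] _ xS /exists_inP[m mS /and3P[mx mx' mmax]].
pose r y := if y == x then m else y.
apply: (order_contractible_retract (r := r)); first exact: subsetDl.
- by move=> y yS; rewrite /r; case: eqP => [_|/eqP yx]; rewrite !inE ?mx ?yx.
- move=> y z yS zS yz; rewrite /r; case: eqP => [yx|/eqP yx]; case: eqP => [zx|/eqP zx].
  + exact: refl.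
  + by apply: tr mx' _; rewrite -yx.
  + by move/forall_inP/(_ y yS)/implyP: mmax; apply; rewrite yx -zx.
  + exact: yz.
- by move=> y; rewrite !inE /r => /andP[/negbTE ->].
Qed.

Lemma euler_char1_set1 le c : reflexive le -> euler_char1 le [set c].
Proof.
move=> refl a /(_ c); rewrite big_set1 inE eqxx => <- //.
by apply: esym; apply: big_pred1 => y; rewrite !inE andb_idr // => /eqP ->.
Qed.

Lemma euler_char1_order_contractible le S : partial_order le ->
  order_contractible le S -> euler_char1 le S.
Proof.
move=> po; have po' := partial_order_dual po.
elim/setD1_ind: S => S IH contrS.
have [/exists_inP[x xS xbeat]|/exists_inPn nobeat] :=
  boolP [exists x in S, down_beat le S x].
  apply: (euler_char1_remove_beat po xS xbeat); apply: IH => //.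
  exact: order_contractible_remove_beat.
have [/exists_inP[x xS xbeat]|/exists_inPn nobeat'] :=
  boolP [exists x in S, down_beat (dual_rel le) S x].
  apply: (euler_char1_dual po'); apply: (euler_char1_remove_beat po' xS xbeat).
  apply: (euler_char1_dual po); apply: IH => //.
  exact: order_contractible_dual (order_contractible_remove_beat po' xS xbeat
    (order_contractible_dual contrS)).
case: contrS => f /(core_fence_id po nobeat nobeat') fid [c cS fc].
have -> : S = [set c].
  by apply/setP => y; rewrite inE; apply/idP/eqP => [yS|->//]; rewrite -(fid y) ?fc.
by apply: euler_char1_set1; case: po => -[].
Qed.
End Weightings.

Section ZetaMatrix.
Variables (F : fieldType) (n : nat) (le : rel 'I_n).
Hypothesis le_order : partial_order le.

Definition zeta_mx : 'M[F]_n := \matrix_(i, j) (le i j)%:R.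

Lemma rank_zeta_mx : \rank zeta_mx = n.
Proof.
apply/eqP/inj_row_free => w wZ; apply/rowP => i; rewrite mxE.
apply: (zeta_sol0 le_order _ (finset.in_setT i)) => j _.
transitivity ((w *m zeta_mx) 0 j); last by rewrite wZ mxE.
rewrite !mxE big_mkcondr; apply: eq_big => [k|k _]; first by rewrite finset.in_setT.
by rewrite mxE; case: (le k j); rewrite ?mulr1 ?mulr0.
Qed.

Lemma rank_ones_sub_zeta_mx_lt : euler_char1 F le [set: 'I_n] ->
  (\rank (const_mx 1 - zeta_mx)%R < n)%N.
Proof.
move=> chi; have [a Ha] := zeta_sol_exists [set: 'I_n] (fun=> 1 : F) le_order.
pose v := \row_i a i.
have v0 : v != 0.
  apply/eqP => v0; move/eqP: (chi a Ha); rewrite big1 => [|i _].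
    by rewrite eq_sym oner_eq0.
  by have := congr1 (fun u : 'rV_n => u 0 i) v0; rewrite !mxE.
have vM : v *m (const_mx 1 - zeta_mx) = 0.
  apply/rowP => j; rewrite mulmxBr !mxE; apply/eqP; rewrite subr_eq0; apply/eqP.
  transitivity (\sum_(i in [set: 'I_n]) a i).
    by apply: eq_big => [i|i _]; rewrite ?finset.in_setT // !mxE mulr1.
  rewrite (chi a Ha) -(Ha j (finset.in_setT j)) big_mkcondr; apply: esym.
  apply: eq_big => [i|i _]; rewrite ?finset.in_setT // !mxE.
  by case: (le i j); rewrite ?mulr1 ?mulr0.
rewrite -subn_gt0 -mxrank_ker (leq_trans _ (mxrankS (introT sub_kermxP vM))) //.
by rewrite lt0n mxrank_eq0.
Qed.

Lemma rank_const_mx_le1 (a : F) : (\rank (const_mx a : 'M[F]_n) <= 1)%N.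
Proof.
have -> : const_mx a = (const_mx a : 'cV_n) *m (const_mx 1 : 'rV_n).
  by apply/matrixP => i j; rewrite !mxE big_ord1 !mxE mulr1.
exact: mulmx_max_rank.
Qed.

Lemma corank_ones_sub_zeta_mx : euler_char1 F le [set: 'I_n] ->
  (n - \rank (const_mx 1 - zeta_mx)%R)%N = 1%N.
Proof.
move=> chi; apply/eqP; rewrite eqn_leq subn_gt0 rank_ones_sub_zeta_mx_lt // andbT.
rewrite leq_subLR addnC -{1}rank_zeta_mx.
rewrite {1}(_ : zeta_mx = const_mx 1 - (const_mx 1 - zeta_mx)); last first.
  by rewrite opprB addrC subrK.
apply: leq_trans (mxrank_add _ _) _.
by rewrite mxrank_opp leq_add2r rank_const_mx_le1.
Qed.
End ZetaMatrix.

Local Open Scope classical_set_scope.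

Lemma connected_locally_constant (T : topologicalType) (A : set T) (P : T -> Prop) :
  connected A -> (forall t, A t -> \forall s \near t, A s -> (P s <-> P t)) ->
  forall t0 t, A t0 -> P t0 -> A t -> P t.
Proof.
move=> Aconn Aloc t0 t At0 Pt0 At.
suff AP : A `&` P = A by move: At; rewrite -AP => -[].
apply: Aconn; first by exists t0.
- exists (interior [set s | A s -> P s]); first exact: open_interior.
  apply/seteqP; split=> [s [As Ps]|s [As Is]].
    by split=> //; apply: filterS (Aloc s As) => u Pu Au; apply/(Pu Au).
  by split=> //; exact: (nbhs_singleton Is As).
- exists (~` interior [set s | A s -> ~ P s]); first exact/open_closedC/open_interior.
  apply/seteqP; split=> [s [As Ps]|s [As nIs]].
    by split=> // Is; exact: (nbhs_singleton Is As Ps).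
  split=> //; apply: contrapT => nPs; apply: nIs.
  by apply: filterS (Aloc s As) => u Pu Au /(Pu Au).
Qed.

Section Specialization.
Variable X : topologicalType.
Implicit Types a b x : X.

Lemma fin_le_minimal_open a b : fin_le a b <-> minimal_open b a.
Proof.
split=> [ab|ba z za U [oU Ub]]; first by apply: ab => U [].
by apply: za; split=> //; exact: ba.
Qed.

Lemma fin_leP a b : fin_le a b <-> forall V, nbhs b V -> V a.
Proof.
rewrite fin_le_minimal_open; split=> [ba V|ba U [oU Ub]].
  by rewrite nbhsE; case=> O [oO Ob] OV; apply: OV; apply: ba.
exact: ba _ (open_nbhs_nbhs (conj oU Ub)).
Qed.

Lemma fin_le_antisym : kolmogorov_space X -> forall a b, fin_le a b -> fin_le b a -> a = b.
Proof.
move=> T0 a b /fin_leP ab /fin_leP ba; apply: contrapT => /eqP /T0[A].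
by rewrite !inE => -[[/ba + /(_ _)] | [/ab + /(_ _)]].
Qed.

Variables (n : nat) (lab : 'I_n -> X).

Definition spec_rel : rel 'I_n := fun i j => `[< fin_le (lab i) (lab j) >].

Lemma spec_rel_partial_order :
  injective lab -> kolmogorov_space X -> partial_order spec_rel.
Proof.
move=> lab_inj T0; split; first split=> [i|j i k /asboolP ij /asboolP jk].
- by apply/asboolP.
- by apply/asboolP; exact: subset_trans ij jk.
- move=> i j /andP[/asboolP ij /asboolP ji].
  by apply: lab_inj; exact: fin_le_antisym.
Qed.

Hypothesis lab_surj : forall x, exists i, lab i = x.

Lemma nbhs_minimal_open x : nbhs x (minimal_open x).
Proof.
have near_i i : \forall z \near x, z = lab i -> minimal_open x z.
  have [xi|nxi] := pselect (minimal_open x (lab i)); first by apply: filterE => z ->.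
  have [U /not_implyP[[oU Ux] nUi]] : exists U, ~ (open U /\ U x -> U (lab i)).
    by apply/existsNP => allU; apply: nxi => U; exact: allU.
  by apply: filterS (open_nbhs_nbhs (conj oU Ux)) => z Uz zi; rewrite zi in Uz.
apply: filterS (filter_forall (nbhs_filter x) near_i) => z zU.
by have [i iz] := lab_surj z; exact: zU i (esym iz).
Qed.
End Specialization.

Section Homotopy.
Variables (R : realType) (X : topologicalType) (H : X * R -> X).
Hypothesis H_cont : {within [set p : X * R | 0 <= p.2 <= 1], continuous H}.

Lemma homotopy_nbhs x (t : R) W : 0 <= t <= 1 -> nbhs (H (x, t)) W ->
  exists2 A, nbhs x A & exists2 B, nbhs t B &
    forall y s, A y -> B s -> 0 <= s <= 1 -> W (H (y, s)).
Proof.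
move=> t01 HW.
have := (@subspace_continuousP _ [set p : X * R | 0 <= p.2 <= 1] _ H).1
  H_cont (x, t) t01 W HW.
rewrite nbhs_simpl /= => -[[A B] /= [xA tB] AB].
by exists A => //; exists B => // y s Ay Bs s01; exact: (AB (y, s)).
Qed.

Lemma homotopy_fin_le (t : R) a b :
  0 <= t <= 1 -> fin_le a b -> fin_le (H (a, t)) (H (b, t)).
Proof.
move=> t01 /fin_leP ab; apply/fin_leP => V /(homotopy_nbhs t01)[A /ab Aa [B Bt AB]].
exact: AB (nbhs_singleton Bt) t01.
Qed.

Variables (n : nat) (lab : 'I_n -> X).
Hypothesis lab_surj : forall x, exists i, lab i = x.

Lemma homotopy_near_le (t : R) : 0 <= t <= 1 ->
  \forall s \near t, 0 <= s <= 1 -> forall x, fin_le (H (x, s)) (H (x, t)).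
Proof.
move=> t01.
have near_i i : \forall s \near t, 0 <= s <= 1 -> fin_le (H (lab i, s)) (H (lab i, t)).
  have [A /nbhs_singleton Ai [B Bt AB]] :=
    homotopy_nbhs t01 (nbhs_minimal_open lab_surj (H (lab i, t))).
  by apply: filterS Bt => s Bs s01; apply/fin_le_minimal_open; exact: AB.
apply: filterS (filter_forall (nbhs_filter t) near_i) => s near s01 x.
by have [i <-] := lab_surj x; exact: near.
Qed.
End Homotopy.

(* For [s] near [t], [H (-, s) <= H (-, t)]; hence being fenced to the
   identity is a locally constant property of [t] on the connected [0, 1]. *)
Lemma contractible_order_contractible (R : realType) (X : topologicalType) n
    (lab : 'I_n -> X) :
  bijective lab -> contractible R X -> order_contractible (spec_rel lab) [set: 'I_n]%SET.
Proof.
case=> g labK gK [x0 [H [H_cont [H0 H1]]]].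
have lab_surj x : exists i, lab i = x by exists (g x).
pose Ht t i := g (H (lab i, t)).
have spec_Ht t s i j :
    fin_le (H (lab i, t)) (H (lab j, s)) -> spec_rel lab (Ht t i) (Ht s j).
  by move=> ts; apply/asboolP; rewrite /Ht !gK.
have Ht_mono t : 0 <= t <= 1 -> monotone_on (spec_rel lab) [set: 'I_n]%SET (Ht t).
  move=> t01; split=> // i j _ _ /asboolP ij.
  by apply: spec_Ht; exact: homotopy_fin_le.
have fence_Ht : fence (spec_rel lab) [set: 'I_n]%SET (Ht 1).
  apply: (@connected_locally_constant _ [set t : R | 0 <= t <= 1]
    (fun t => fence (spec_rel lab) [set: 'I_n]%SET (Ht t)) _ _ 0 1).
  - apply/connected_intervalP => x y /andP[x0' _] /andP[_ y1] z /andP[xz zy].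
    by rewrite /= (le_trans x0' xz) (le_trans zy y1).
  - move=> t t01; apply: filterS (homotopy_near_le H_cont lab_surj t01) => s st s01.
    split=> [fence_s|fence_t].
      by apply: fence_step fence_s (Ht_mono t t01) _; left=> i _; exact: spec_Ht (st s01 _).
    by apply: fence_step fence_t (Ht_mono s s01) _; right=> i _; exact: spec_Ht (st s01 _).
  - by rewrite /= lexx ler01.
  - by apply: fence_id => i _; rewrite /Ht H0 labK.
  - by rewrite /= ler01 lexx.
by exists (Ht 1) => //; exists (g x0) => // i _; rewrite /Ht H1.
Qed.

Theorem mainTheorem11 (R : realType) (X : topologicalType) (n : nat)
  (lab : 'I_n -> X) (lab_bij : bijective lab)
  (hT0 : kolmogorov_space X) (hcontr : contractible R X) (hn : (1 < n)%N) :
  (n - \rank (XM R lab))%N = 1%N.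
Proof.
have po := spec_rel_partial_order (bij_inj lab_bij) hT0.
have chi := euler_char1_order_contractible (F := R) po
  (contractible_order_contractible lab_bij hcontr).
rewrite -(corank_ones_sub_zeta_mx po chi); congr (_ - \rank _)%N.
by apply/matrixP => i j; rewrite !mxE /spec_rel; case: asboolP; rewrite ?subrr ?subr0.
Qed.
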